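(* Let $\langle A;\cdot\rangle$ be a semigroup which is an Abelian algebra and satisfies condition $( * )$. Then: (1) the relations $X$ and $Y$ restricted to $A\cdot A$ are equivalence relations on $A\cdot A$; (2) for all idempotents $e,f\in A$ we have $\Phi_e\cap\Psi_f=\{ef\}$, and $ef$ is an idempotent; (3) for every $a\in A\cdot A$ there exist idempotents $e,f\in A$ such that $a\in X_e\cap Y_f$, and $X_e\cap Y_f=Z_{ef}$.
   Context: $A\cdot A=\{xy\mid x,y\in A\}$; an idempotent is $e$ with $ee=e$. Condition $( * )$: either ($bcA=bA$ and $Abc=Ac$ for all $b,c\in A$), or the set $A\cdot A$ is finite. Relations on $A$: $x\,\Phi\,y\iff\exists z\,(xz=yz)$; $x\,\Psi\,y\iff\exists z\,(zx=zy)$; $x\,X\,y\iff\exists z\,(zx=x\wedge zy=y\wedge z^2=z)$; $x\,Y\,y\iff\exists z\,(xz=x\wedge yz=y\wedge z^2=z)$; $x\,Z\,y\iff (x\,X\,y\wedge x\,Y\,y)$. For an equivalence (or relation) $\Theta$ and $a\in A\cdot A$, $\Theta_a$ denotes $\{x\in A\cdot A\mid x\,\Theta\,a\}$. A polynomial operation of an algebra is an operation obtained from a term by substituting elements of the algebra for some of its variables. An algebra is called Abelian if for every polynomial operation $t(x,y_1,\ldots,y_n)$ and all elements $u,v,c_1,\ldots,c_n,d_1,\ldots,d_n$ of the algebra, $t(u,c_1,\ldots,c_n)=t(u,d_1,\ldots,d_n)$ implies $t(v,c_1,\ldots,c_n)=t(v,d_1,\ldots,d_n)$. *)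

From Stdlib Require Import List.

Section Semigroup.
Variable A : Type.
Variable mul : A -> A -> A.

(* Terms of the semigroup signature with variables indexed by nat and
   constants from A; evaluating a term with some variables substituted by
   constants gives the polynomial operations. *)
Inductive term : Type :=
| Var : nat -> term
| Cst : A -> term
| Mul : term -> term -> term.

Fixpoint eval (env : nat -> A) (t : term) : A :=
  match t with
  | Var n => env n
  | Cst a => a
  | Mul t1 t2 => mul (eval env t1) (eval env t2)
  end.

Definition env (x : A) (ys : nat -> A) : nat -> A :=
  fun n => match n with O => x | S i => ys i end.

Definition abelian : Prop :=
  forall (t : term) (u v : A) (c d : nat -> A),
    eval (env u c) t = eval (env u d) t ->
    eval (env v c) t = eval (env v d) t.

Definition associative : Prop :=
  forall x y z : A, mul (mul x y) z = mul x (mul y z).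

Definition inAA (x : A) : Prop := exists y z : A, x = mul y z.

Definition idempotent (e : A) : Prop := mul e e = e.

Definition cond_star : Prop :=
  (forall b c : A,
      (forall x, (exists a, x = mul (mul b c) a) <-> (exists a, x = mul b a)) /\
      (forall x, (exists a, x = mul (mul a b) c) <-> (exists a, x = mul a c)))
  \/ (exists l : list A, forall x, inAA x -> In x l).

Definition relPhi (x y : A) : Prop := exists z, mul x z = mul y z.
Definition relPsi (x y : A) : Prop := exists z, mul z x = mul z y.
Definition relX (x y : A) : Prop :=
  exists z, mul z x = x /\ mul z y = y /\ mul z z = z.
Definition relY (x y : A) : Prop :=
  exists z, mul x z = x /\ mul y z = y /\ mul z z = z.
Definition relZ (x y : A) : Prop := relX x y /\ relY x y.

Definition equiv_on_AA (R : A -> A -> Prop) : Prop :=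
  (forall x, inAA x -> R x x) /\
  (forall x y, inAA x -> inAA y -> R x y -> R y x) /\
  (forall x y z, inAA x -> inAA y -> inAA z -> R x y -> R y z -> R x z).

(* Theta_a = { x in A.A | x Theta a } *)
Definition cls (R : A -> A -> Prop) (a : A) (x : A) : Prop := inAA x /\ R x a.

End Semigroup.
Arguments associative {A}. Arguments abelian {A}. Arguments cond_star {A}. Arguments inAA {A}. Arguments idempotent {A}. Arguments relPhi {A}. Arguments relPsi {A}. Arguments relX {A}. Arguments relY {A}. Arguments relZ {A}. Arguments equiv_on_AA {A}. Arguments cls {A}. Arguments eval {A}. Arguments env {A}.

Arguments Var {A}.
Arguments Cst {A}.
Arguments Mul {A}.

From Stdlib Require Import List Lia Classical.

(* Abelianness applied to the polynomials [c * x] and [x * c] says that an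
   equation [c u = d u] (resp. [u c = u d]) holding for one [u] holds for all.
   For a product [a = y z] this cancels a trailing (resp. leading) factor from
   [e a u = a u] (resp. [w a = w a q]).  Hence every [a] in [A.A] has an
   idempotent two-sided unit: under the first half of (star) it comes from the
   ideal equalities, under the second from the periodicity of the powers of
   [a].  All three parts then follow by transferring equations along the two
   cancellation laws. *)

Lemma finite_range_collision (B : Type) (p : nat -> B) (l : list B) :
  (forall n, In (p n) l) -> exists i j, i < j /\ p i = p j.
Proof.
  intros Hl. apply NNPP. intros Hcoll.
  assert (Hinj : forall i j, p i = p j -> i = j).
  { intros i j Hij. destruct (PeanoNat.Nat.lt_trichotomy i j) as [h | [h | h]]; auto.
    - exfalso. apply Hcoll. eauto.
    - exfalso. apply Hcoll. exists j, i. auto. }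
  assert (Hnodup : NoDup (map p (seq 0 (S (length l))))).
  { apply NoDup_map_NoDup_ForallPairs; [| apply seq_NoDup].
    intros x y _ _. apply Hinj. }
  assert (Hincl : incl (map p (seq 0 (S (length l)))) l).
  { intros x Hx. apply in_map_iff in Hx. destruct Hx as [n [<- _]]. apply Hl. }
  pose proof (NoDup_incl_length Hnodup Hincl) as Hlen.
  rewrite length_map, length_seq in Hlen. lia.
Qed.

Section AbelianSemigroup.

Variables (A : Type) (mul : A -> A -> A).
Hypothesis mulA : associative mul.
Hypothesis mul_abelian : abelian mul.

Local Infix "·" := mul (at level 40, left associativity).

Definition local_unit (e a : A) : Prop := e · e = e /\ e · a = a /\ a · e = a.

Lemma mulr_transfer (c d u v : A) : c · u = d · u -> c · v = d · v.
Proof. exact (mul_abelian (Mul (Var 1) (Var 0)) u v (fun _ => c) (fun _ => d)). Qed.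

Lemma mull_transfer (c d u v : A) : u · c = u · d -> v · c = v · d.
Proof. exact (mul_abelian (Mul (Var 0) (Var 1)) u v (fun _ => c) (fun _ => d)). Qed.

Lemma mull_cancel_AA (a e u : A) : inAA mul a -> e · a · u = a · u -> e · a = a.
Proof.
  intros [y [z ->]] H.
  rewrite <- mulA.
  apply (mulr_transfer _ _ (z · u)).
  rewrite !mulA in H. rewrite !mulA. exact H.
Qed.

Lemma mulr_cancel_AA (a q w : A) : inAA mul a -> w · a = w · (a · q) -> a = a · q.
Proof.
  intros [y [z ->]] H.
  rewrite mulA.
  apply (mull_transfer _ _ (w · y)).
  rewrite !mulA. rewrite !mulA in H. exact H.
Qed.

Lemma local_unit_of_ideal_eqs (a : A) :
  (forall b c : A,
      (forall x, (exists t, x = b · c · t) <-> (exists t, x = b · t)) /\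
      (forall x, (exists t, x = t · b · c) <-> (exists t, x = t · c))) ->
  inAA mul a -> exists e, local_unit e a.
Proof.
  intros Hid [b [c Hbc]].
  assert (Har : exists t, a = a · t).
  { destruct (proj2 (proj1 (Hid b c) a)) as [t Ht]; [exists c; exact Hbc |].
    exists t. rewrite Hbc at 2. exact Ht. }
  assert (Hal : exists t, a = t · a).
  { destruct (proj2 (proj2 (Hid b c) a)) as [t Ht]; [exists b; exact Hbc |].
    exists t. rewrite Hbc at 2. rewrite <- mulA. exact Ht. }
  destruct (proj2 (proj1 (Hid a a) a) Har) as [u Hu].
  destruct (proj2 (proj2 (Hid a a) a) Hal) as [v Hv].
  assert (Hu' : a = a · (a · u)) by (rewrite <- mulA; exact Hu).
  (* [a u = v a] is both a right and a left unit of [a]. *)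
  assert (Huv : a · u = v · a) by (rewrite Hv at 1; rewrite !mulA, <- Hu'; reflexivity).
  exists (a · u). split; [| split].
  - rewrite Huv at 1. rewrite !mulA, <- Hu'. symmetry. exact Huv.
  - rewrite Huv. symmetry. exact Hv.
  - symmetry. exact Hu'.
Qed.

(* [spow a n] is [a] to the power [n + 1]. *)
Fixpoint spow (a : A) (n : nat) : A :=
  match n with O => a | S n => spow a n · a end.

Lemma spow_add (a : A) (m n : nat) : spow a m · spow a n = spow a (S (m + n)).
Proof.
  induction n as [| n IHn]; simpl.
  - rewrite PeanoNat.Nat.add_0_r. reflexivity.
  - rewrite <- mulA, IHn, PeanoNat.Nat.add_succ_r. reflexivity.
Qed.

Lemma spow_inAA (a : A) (n : nat) : inAA mul a -> inAA mul (spow a n).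
Proof. destruct n; simpl; [auto | intros _; do 2 eexists; reflexivity]. Qed.

Lemma spow_period_unit (a : A) (i k : nat) :
  inAA mul a -> spow a i = spow a (S (i + k)) -> a = a · spow a k.
Proof.
  intros Ha Hper. destruct i as [| i].
  - rewrite <- (spow_add a 0 k) in Hper. exact Hper.
  - apply (mulr_cancel_AA _ _ (spow a i) Ha).
    change (spow a i · a) with (spow a (S i)).
    change (a · spow a k) with (spow a 0 · spow a k).
    rewrite Hper, (spow_add a 0 k), spow_add.
    f_equal. lia.
Qed.

Lemma spow_mul_unit (a q : A) (n : nat) : a = a · q -> spow a n · q = spow a n.
Proof.
  intros Haq. induction n as [| n IHn]; simpl.
  - symmetry. exact Haq.
  - rewrite mulA, <- Haq. reflexivity.
Qed.

Lemma local_unit_of_finite_AA (a : A) (l : list A) :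
  (forall x, inAA mul x -> In x l) -> inAA mul a -> exists e, local_unit e a.
Proof.
  intros Hl Ha.
  destruct (finite_range_collision _ (spow a) l) as [i [j [Hij Hper]]].
  { intros n. apply Hl, spow_inAA, Ha. }
  set (k := j - i - 1).
  assert (Haq : a = a · spow a k).
  { apply (spow_period_unit a i k Ha). rewrite Hper. f_equal. lia. }
  exists (spow a k). split; [| split].
  - exact (spow_mul_unit a _ k Haq).
  - change (spow a k · a) with (spow a (S (0 + k))).
    rewrite <- spow_add. symmetry. exact Haq.
  - symmetry. exact Haq.
Qed.

Lemma local_unit_of_star (a : A) :
  cond_star mul -> inAA mul a -> exists e, local_unit e a.
Proof.
  intros [Hid | [l Hl]].
  - exact (local_unit_of_ideal_eqs a Hid).
  - exact (local_unit_of_finite_AA a l Hl).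
Qed.

Lemma relX_sym (x y : A) : relX mul x y -> relX mul y x.
Proof. intros [z [Hx [Hy Hz]]]. exists z. auto. Qed.

Lemma relY_sym (x y : A) : relY mul x y -> relY mul y x.
Proof. intros [z [Hx [Hy Hz]]]. exists z. auto. Qed.

Lemma relX_trans (x y z : A) : relX mul x y -> relX mul y z -> relX mul x z.
Proof.
  intros [u [Hux [Huy Hu]]] [w [Hwy [Hwz _]]].
  exists u. repeat split; auto.
  rewrite (mulr_transfer u w y z) by congruence. exact Hwz.
Qed.

Lemma relY_trans (x y z : A) : relY mul x y -> relY mul y z -> relY mul x z.
Proof.
  intros [u [Hxu [Hyu Hu]]] [w [Hyw [Hzw _]]].
  exists u. repeat split; auto.
  rewrite (mull_transfer u w y z) by congruence. exact Hzw.
Qed.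

Lemma relX_equiv_on_AA : cond_star mul -> equiv_on_AA mul (relX mul).
Proof.
  intros Hstar. split; [| split].
  - intros x Hx. destruct (local_unit_of_star x Hstar Hx) as [e [He [Hex _]]].
    exists e. auto.
  - intros x y _ _. apply relX_sym.
  - intros x y z _ _ _. apply relX_trans.
Qed.

Lemma relY_equiv_on_AA : cond_star mul -> equiv_on_AA mul (relY mul).
Proof.
  intros Hstar. split; [| split].
  - intros x Hx. destruct (local_unit_of_star x Hstar Hx) as [e [He [_ Hxe]]].
    exists e. auto.
  - intros x y _ _. apply relY_sym.
  - intros x y z _ _ _. apply relY_trans.
Qed.

Lemma relPhi_idempotent_mul (x e : A) :
  idempotent mul e -> relPhi mul x e -> x · e = e.
Proof. intros He [z Hz]. rewrite (mulr_transfer x e z e Hz). exact He. Qed.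

Lemma idempotent_of_relPhi (x e : A) :
  inAA mul x -> idempotent mul e -> relPhi mul x e -> idempotent mul x.
Proof.
  intros Hx He Hphi.
  pose proof (relPhi_idempotent_mul x e He Hphi) as Hxe.
  apply (mull_cancel_AA x x e Hx).
  rewrite mulA, Hxe. exact Hxe.
Qed.

Lemma relPhi_relPsi_idempotents (e f x : A) :
  idempotent mul e -> idempotent mul f ->
  cls mul (relPhi mul) e x -> cls mul (relPsi mul) f x -> x = e · f.
Proof.
  intros He Hf [Hx [z Hz]] [_ [w Hw]].
  assert (Hxx : x · x = x) by (apply (idempotent_of_relPhi x e); auto; exists z; exact Hz).
  rewrite <- Hxx at 1. rewrite (mull_transfer _ _ _ x Hw).
  exact (mulr_transfer _ _ _ f Hz).
Qed.

Lemma mul_idempotents_in_relPhi (e f : A) :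
  idempotent mul f -> cls mul (relPhi mul) e (e · f).
Proof.
  intros Hf. split; [do 2 eexists; reflexivity |].
  exists f. rewrite mulA, Hf. reflexivity.
Qed.

Lemma mul_idempotents_in_relPsi (e f : A) :
  idempotent mul e -> cls mul (relPsi mul) f (e · f).
Proof.
  intros He. split; [do 2 eexists; reflexivity |].
  exists e. rewrite <- mulA, He. reflexivity.
Qed.

Lemma relPhi_relPsi_class (e f x : A) :
  idempotent mul e -> idempotent mul f ->
  (cls mul (relPhi mul) e x /\ cls mul (relPsi mul) f x) <-> x = e · f.
Proof.
  intros He Hf. split.
  - intros [Hphi Hpsi]. exact (relPhi_relPsi_idempotents e f x He Hf Hphi Hpsi).
  - intros ->. split.
    + exact (mul_idempotents_in_relPhi e f Hf).
    + exact (mul_idempotents_in_relPsi e f He).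
Qed.

Lemma mul_idempotents_idempotent (e f : A) :
  idempotent mul e -> idempotent mul f -> idempotent mul (e · f).
Proof.
  intros He Hf. destruct (mul_idempotents_in_relPhi e f Hf) as [Hef Hphi].
  exact (idempotent_of_relPhi _ e Hef He Hphi).
Qed.

Lemma relX_relY_class (e f x : A) :
  idempotent mul e -> idempotent mul f ->
  (cls mul (relX mul) e x /\ cls mul (relY mul) f x) <-> cls mul (relZ mul) (e · f) x.
Proof.
  intros He Hf. split.
  - intros [[Hx [z [Hzx [Hze Hz]]]] [_ [w [Hxw [Hfw Hw]]]]].
    split; [exact Hx | split].
    + exists z. repeat split; auto. rewrite <- mulA, Hze. reflexivity.
    + exists w. repeat split; auto. rewrite mulA, Hfw. reflexivity.
  - intros [Hx [[z [Hzx [Hzef Hz]]] [w [Hxw [Hefw Hw]]]]].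
    split; split; auto.
    + exists z. repeat split; auto.
      rewrite <- mulA in Hzef.
      pose proof (mulr_transfer _ _ _ e Hzef) as Hze.
      rewrite He, mulA, He in Hze. exact Hze.
    + exists w. repeat split; auto.
      rewrite mulA in Hefw.
      pose proof (mull_transfer _ _ _ f Hefw) as Hfw.
      rewrite <- mulA, Hf in Hfw. exact Hfw.
Qed.

End AbelianSemigroup.

Theorem mainTheorem13 (A : Type) (mul : A -> A -> A)
  (Hassoc : associative mul) (Habel : abelian mul) (Hstar : cond_star mul) :
  (equiv_on_AA mul (relX mul) /\ equiv_on_AA mul (relY mul)) /\
  (forall e f : A, idempotent mul e -> idempotent mul f ->
     (forall x, (cls mul (relPhi mul) e x /\ cls mul (relPsi mul) f x)
                <-> x = mul e f) /\
     idempotent mul (mul e f)) /\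
  (forall a : A, inAA mul a ->
     exists e f : A, idempotent mul e /\ idempotent mul f /\
       cls mul (relX mul) e a /\ cls mul (relY mul) f a /\
       (forall x, (cls mul (relX mul) e x /\ cls mul (relY mul) f x)
                  <-> cls mul (relZ mul) (mul e f) x)).
Proof.
  split; [split | split].
  - exact (relX_equiv_on_AA A mul Hassoc Habel Hstar).
  - exact (relY_equiv_on_AA A mul Hassoc Habel Hstar).
  - intros e f He Hf. split.
    + intros x. exact (relPhi_relPsi_class A mul Hassoc Habel e f x He Hf).
    + exact (mul_idempotents_idempotent A mul Hassoc Habel e f He Hf).
  - intros a Ha.
    destruct (local_unit_of_star A mul Hassoc Habel a Hstar Ha) as [e [He [Hea Hae]]].
    exists e, e. split; [exact He |]. split; [exact He |].
    split; [split; [exact Ha | exists e; auto] |].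
    split; [split; [exact Ha | exists e; auto] |].
    intros x. exact (relX_relY_class A mul Hassoc Habel e e x He He).
Qed.
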